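(* Let $\mathbb{F}_3$ be the free group on $a,b,c$, let $r = aba^{-1}b^{-1}c$ and $N$ its normal closure. Let $R = \{r_1^{\pm1},\dots,r_5^{\pm1}\}$ where $r_1 = aba^{-1}b^{-1}c$, $r_2 = ba^{-1}b^{-1}ca$, $r_3 = a^{-1}b^{-1}cab$, $r_4 = b^{-1}caba^{-1}$, $r_5 = caba^{-1}b^{-1}$. A piece is an initial subword of some element of $R$. Then every nontrivial cyclically reduced word $w \in N$ contains (as a subword) a piece of length $4$. *)

From mathcomp Require Import all_boot.
From Stdlib Require Import Relation_Operators.

Set Implicit Arguments.
Unset Strict Implicit.
Unset Printing Implicit Defensive.

(* A letter is a generator index (0 = a, 1 = b, 2 = c) with a sign
   (true = x, false = x^{-1}). *)
Definition letter := ('I_3 * bool)%type.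
Definition word := seq letter.

Definition linv (x : letter) : letter := (x.1, ~~ x.2).
Definition winv (w : word) : word := rev (map linv w).

Definition ga : 'I_3 := @Ordinal 3 0 isT.
Definition gb : 'I_3 := @Ordinal 3 1 isT.
Definition gc : 'I_3 := @Ordinal 3 2 isT.
Definition A : letter := (ga, true).
Definition Ai : letter := (ga, false).
Definition B : letter := (gb, true).
Definition Bi : letter := (gb, false).
Definition C : letter := (gc, true).
Definition Ci : letter := (gc, false).

Definition reduced (w : word) : Prop :=
  forall u v (x : letter), w <> u ++ x :: linv x :: v.

Definition nontriv_cyc_reduced (w : word) : Prop :=
  [/\ w <> [::], reduced w & last (head A w) w <> linv (head A w)].

Inductive fstep : word -> word -> Prop :=
| fstep_intro (u v : word) (x : letter) : fstep (u ++ x :: linv x :: v) (u ++ v).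

Definition freeeq : word -> word -> Prop := clos_refl_sym_trans word fstep.

Inductive in_nclosure (r : word) : word -> Prop :=
| N_nil : in_nclosure r [::]
| N_rel : in_nclosure r r
| N_relinv : in_nclosure r (winv r)
| N_cat u v : in_nclosure r u -> in_nclosure r v -> in_nclosure r (u ++ v)
| N_conj u w : in_nclosure r w -> in_nclosure r (u ++ w ++ winv u)
| N_eq u v : freeeq u v -> in_nclosure r u -> in_nclosure r v.

Definition r1 : word := [:: A; B; Ai; Bi; C].
Definition r2 : word := [:: B; Ai; Bi; C; A].
Definition r3 : word := [:: Ai; Bi; C; A; B].
Definition r4 : word := [:: Bi; C; A; B; Ai].
Definition r5 : word := [:: C; A; B; Ai; Bi].

Definition Rset : seq word :=
  [:: r1; r2; r3; r4; r5; winv r1; winv r2; winv r3; winv r4; winv r5].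

Definition piece (p : word) : Prop := exists2 s, s \in Rset & prefix p s.

From mathcomp Require Import all_boot.

Set Implicit Arguments.
Unset Strict Implicit.
Unset Printing Implicit Defensive.

(* Sending c to b a b^-1 a^-1 defines a homomorphism phi from F_3 onto the free
   group on a, b which kills r, hence N.  Read a freely reduced word w without
   subword of length 4 from any r_i^{+-1} letter by letter, remembering its last
   three letters and the top three letters of the free reduction of phi(w)
   (seen as a stack), together with whether these are all of it.  Only finitely
   many such states occur, and a machine check shows that in none of them the
   stack can become empty; so phi(w) <> 1 and w is not in N. *)

Lemma linvK : involutive linv.
Proof. by case=> i b; rewrite /linv /= negbK. Qed.

Lemma winv_cons x w : winv (x :: w) = winv w ++ [:: linv x].
Proof. by rewrite /winv /= rev_cons cats1. Qed.

Lemma winv_cat u v : winv (u ++ v) = winv v ++ winv u.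
Proof. by rewrite /winv map_cat rev_cat. Qed.

(* A stack holds a freely reduced word with its last letter on top. *)
Definition push (st : word) (x : letter) : word :=
  if st is y :: st' then (if y == linv x then st' else x :: st) else [:: x].

Fixpoint stack_reduced (st : word) : bool :=
  if st is y :: (z :: _) as st' then (z != linv y) && stack_reduced st' else true.

Lemma push_reduced st x : stack_reduced st -> stack_reduced (push st x).
Proof.
case: st => [|y st] //=; case: ifP => [_|y_x st_red] /=.
  by case: st => // z st /andP[].
by rewrite y_x.
Qed.

Lemma pushes_reduced st s : stack_reduced st -> stack_reduced (foldl push st s).
Proof. by elim: s st => //= x s IHs st /(push_reduced x); apply: IHs. Qed.

Lemma push_linv st x : stack_reduced st -> push (push st x) (linv x) = st.
Proof.
case: st => [|y st] /=; first by rewrite linvK eqxx.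
case: ifP => [/eqP-> | _] st_red; last by rewrite /= linvK eqxx.
by case: st st_red => // z st /= /andP[/negbTE->].
Qed.

Lemma pushes_cancel st s : stack_reduced st -> foldl push st (s ++ winv s) = st.
Proof.
elim: s st => //= x s IHs st st_red.
by rewrite winv_cons catA foldl_cat IHs /= ?push_linv ?push_reduced.
Qed.

Lemma pushes_reduce st s : stack_reduced st ->
  foldl push st s = foldl push st (rev (foldl push [::] s)).
Proof.
move=> st_red; elim/last_ind: s => //= s x IHs.
rewrite -!cats1 !foldl_cat /= IHs.
case: (foldl push [::] s) => [|y t] //=.
case: ifP => [/eqP-> | _]; last by rewrite !rev_cons -!cats1 !foldl_cat.
by rewrite rev_cons -cats1 foldl_cat /= -{2}[x]linvK push_linv ?pushes_reduced.
Qed.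

Definition phi (x : letter) : word :=
  if x.1 == gc then (if x.2 then [:: B; A; Bi; Ai] else [:: A; B; Ai; Bi])
  else [:: x].

Definition phi_word (w : word) : word := flatten (map phi w).

Lemma phi_linv x : phi (linv x) = winv (phi x).
Proof. by case: x => [[[|[|[|?]]] ?] []]. Qed.

Lemma phi_word_cat u v : phi_word (u ++ v) = phi_word u ++ phi_word v.
Proof. by rewrite /phi_word map_cat flatten_cat. Qed.

Lemma phi_word_winv w : phi_word (winv w) = winv (phi_word w).
Proof.
elim: w => //= x w IHw.
by rewrite winv_cons phi_word_cat IHw /phi_word /= cats0 phi_linv winv_cat.
Qed.

Definition red_phi (w : word) : word := foldl push [::] (phi_word w).

Lemma red_phi_reduced w : stack_reduced (red_phi w).
Proof. exact: pushes_reduced. Qed.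

Lemma red_phi_cat u v : red_phi (u ++ v) = foldl push (red_phi u) (phi_word v).
Proof. by rewrite /red_phi phi_word_cat foldl_cat. Qed.

Lemma red_phi_catr u v :
  red_phi (u ++ v) = foldl push (red_phi u) (rev (red_phi v)).
Proof. by rewrite red_phi_cat pushes_reduce ?red_phi_reduced. Qed.

Lemma red_phi_freeeq u v : freeeq u v -> red_phi u = red_phi v.
Proof.
elim=> [_ _ [s t x] | // | _ _ _ -> // | _ _ _ _ -> _ -> //].
rewrite !red_phi_cat /phi_word /= -/(phi_word t) phi_linv catA foldl_cat.
by rewrite pushes_cancel ?red_phi_reduced.
Qed.

Lemma red_phi_nclosure w : in_nclosure r1 w -> red_phi w = [::].
Proof.
elim=> [| | | u v _ u1 _ v1 | u v _ v1 | u v /red_phi_freeeq <- //].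
- by [].
- by vm_compute.
- by vm_compute.
- by rewrite red_phi_catr u1 v1.
rewrite catA red_phi_cat phi_word_winv red_phi_catr v1 /=.
by rewrite /red_phi -foldl_cat pushes_cancel.
Qed.

Definition pieces4 : seq word := map (take 4) Rset.

Lemma mem_pieces4 p : p \in pieces4 -> piece p /\ size p = 4.
Proof.
have size_pieces4 : all (fun q => size q == 4) pieces4 by vm_compute.
move=> p_in; split; last exact/eqP/(allP size_pieces4).
by case/mapP: p_in => s s_in ->; exists s => //; apply: prefix_take.
Qed.

(* A state [(u, st, exact)] after reading [w]: [u] is the reversed suffix of
   length at most 3 of [w], [st] is the top of the stack [red_phi w], and all of
   it when [exact] holds. *)
Definition state := (word * word * bool)%type.

Definition tracks (w : word) (s : state) : Prop :=
  let: (u, st, exact) := s in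
  u = take 3 (rev w) /\
  exists2 rest, red_phi w = st ++ rest & exact -> rest = [::].

Fixpoint no_underflow (st s : word) : bool :=
  if s is x :: s' then (st != [::]) && no_underflow (push st x) s' else true.

Lemma pushes_no_underflow st rest s : no_underflow st s ->
  foldl push (st ++ rest) s = foldl push st s ++ rest.
Proof.
elim: s st => //= x s IHs [|y st] //= /IHs <-.
by case: ifP.
Qed.

Definition step (s : state) (x : letter) : option state :=
  let: (u, st, exact) := s in
  let st' := foldl push st (phi x) in
  let u' := take 3 (x :: u) in
  if st' == [::] then None
  else if exact then Some (u', take 3 st', size st' <= 3)
  else if no_underflow st (phi x) then Some (u', take 3 st', false) else None.

Lemma step_tracks w s x s' :
  tracks w s -> step s x = Some s' -> tracks (rcons w x) s'.
Proof.
case: s => [[u st] exact] [u_w [rest w_st exact_rest]] /=.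
have u'_wx : take 3 (x :: u) = take 3 (rev (rcons w x)).
  by rewrite rev_rcons u_w /= take_takel.
have wx_st : red_phi (rcons w x) = foldl push (st ++ rest) (phi x).
  by rewrite -cats1 red_phi_cat w_st /phi_word /= cats0.
case: eqP => // _; case: exact exact_rest => [rest0 | _].
  rewrite rest0 // cats0 in wx_st.
  move=> [<-]; split=> //; exists (drop 3 (foldl push st (phi x))).
    by rewrite wx_st cat_take_drop.
  exact: drop_oversize.
case: ifP => // no_uf [<-]; split=> //.
exists (drop 3 (foldl push st (phi x)) ++ rest) => //.
by rewrite wx_st pushes_no_underflow // catA cat_take_drop.
Qed.

Definition admissible (u : word) (x : letter) : bool :=
  (if u is y :: _ then y != linv x else true) && (rev (x :: u) \notin pieces4).

Definition letters : seq letter := [:: A; Ai; B; Bi; C; Ci].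

Lemma mem_letters x : x \in letters.
Proof. by case: x => [[[|[|[|?]]] ?] []]. Qed.

Definition start (x : letter) : state := ([:: x], foldl push [::] (phi x), true).

Definition successors (s : state) : seq state :=
  pmap (fun x => if admissible s.1.1 x then step s x else None) letters.

Fixpoint explore (n : nat) (seen new : seq state) : seq state :=
  if n is n'.+1 then
    let fresh := undup [seq s <- flatten (map successors new) | s \notin seen] in
    explore n' (seen ++ fresh) fresh
  else seen.

(* Any depth is sound here: [reachable_closed] certifies that 8 is enough. *)
Definition reachable : seq state :=
  explore 8 (map start letters) (map start letters).

Lemma start_reachable x : start x \in reachable.
Proof.
have /allP : all (mem reachable) (map start letters) by vm_compute.
by apply; rewrite map_f ?mem_letters.
Qed.

Lemma reachable_closed s x : s \in reachable -> admissible s.1.1 x ->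
  exists2 s', step s x = Some s' & s' \in reachable.
Proof.
have /allP closed : all (fun s => all (fun x => admissible s.1.1 x ==>
    if step s x is Some s' then s' \in reachable else false) letters) reachable.
  by vm_compute.
move=> /closed/allP/(_ x (mem_letters x))/implyP adm /adm.
by case: (step s x) => // s'; exists s'.
Qed.

Lemma reachable_stack_neq0 s : s \in reachable -> s.1.2 != [::].
Proof.
have /allP : all (fun s => s.1.2 != [::]) reachable by vm_compute.
exact.
Qed.

Lemma reduced_rcons w x : reduced (rcons w x) -> reduced w.
Proof.
move=> wx_red u v y w_eq.
by apply: (wx_red u (rcons v x) y); rewrite w_eq rcons_cat.
Qed.

Lemma admissible_rcons w x : reduced (rcons w x) ->
  ~~ has (fun p => infix p (rcons w x)) pieces4 -> admissible (take 3 (rev w)) x.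
Proof.
move=> wx_red /hasPn no_piece; apply/andP; split.
  case w_rev: (rev w) => [|y t] //=; apply/eqP => y_x.
  apply: (wx_red (rev t) [::] y).
  by rewrite -[w]revK w_rev rev_cons y_x linvK -!cats1 -catA.
apply/negP => /no_piece/negP; apply.
have -> : rcons w x = rev (drop 3 (rev w)) ++ rev (x :: take 3 (rev w)).
  by rewrite rev_cons -rcons_cat -rev_cat cat_take_drop revK.
exact: suffix_infix.
Qed.

Lemma tracked_state_exists w : reduced w -> w != [::] ->
  ~~ has (fun p => infix p w) pieces4 -> exists2 s, s \in reachable & tracks w s.
Proof.
elim/last_ind: w => // w x IHw wx_red _ no_piece.
have [-> | w_neq0] := eqVneq w [::].
  exists (start x); first exact: start_reachable.
  by split=> //; exists [::]; rewrite // /red_phi /phi_word /= !cats0.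
have no_piece_w : ~~ has (fun p => infix p w) pieces4.
  apply: contra no_piece => /hasP[p p_in p_w]; apply/hasP; exists p => //.
  exact: infix_trans p_w (infix_rcons w x).
have [[[u st] exact] s_in w_s] := IHw (reduced_rcons wx_red) w_neq0 no_piece_w.
have x_adm : admissible u x.
  by case: w_s => -> _; apply: admissible_rcons.
have [s' x_step s'_in] := reachable_closed s_in x_adm.
by exists s' => //; apply: step_tracks x_step.
Qed.

Theorem theorem3p1 (w : word) :
  nontriv_cyc_reduced w -> in_nclosure r1 w ->
  exists p : word, [/\ piece p, size p = 4 & infix p w].
Proof.
case=> /eqP w_neq0 w_red _ w_N.
have [/hasP[p /mem_pieces4[p_piece p_size] p_w] | no_piece] :=
  boolP (has (fun p => infix p w) pieces4); first by exists p.
have [[[u st] exact] s_in [_ [rest w_st _]]] :=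
  tracked_state_exists w_red w_neq0 no_piece.
have st_neq0 : st != [::] := reachable_stack_neq0 s_in.
have : nilp (st ++ rest) by rewrite -w_st red_phi_nclosure.
by rewrite cat_nilp /nilp size_eq0 (negbTE st_neq0).
Qed.
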